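(* Let $m^*\ge m_*>0$ and $K\ge1$. If $G,\tilde G\in\mathbb{R}^{n\times K}$ satisfy $m_*I_K\preceq\frac1nG^TG\preceq m^*I_K$ and $m_*I_K\preceq\frac1n\tilde G^T\tilde G\preceq m^*I_K$, then $$\|(G^TG)^{-1/2}-(\tilde G^T\tilde G)^{-1/2}\|_F\le L_1n^{-1}\|G-\tilde G\|_F,\qquad\|G(G^TG)^{-1/2}-\tilde G(\tilde G^T\tilde G)^{-1/2}\|_F\le L_2n^{-1/2}\|G-\tilde G\|_F,$$ where $L_1,L_2>0$ depend only on $(K,m_*,m^* )$.
   Context: $A^{-1/2}$ denotes the inverse of the symmetric positive definite square root of $A$; $\preceq$ is the Loewner order. *)

From mathcomp Require Import all_boot all_order all_algebra.
From mathcomp Require Import reals.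
Set Implicit Arguments. Unset Strict Implicit. Unset Printing Implicit Defensive.
Import Order.TTheory GRing.Theory Num.Theory.
Local Open Scope ring_scope.

Definition qform (R : realType) (k : nat) (A : 'M[R]_k) (v : 'cV[R]_k) : R :=
  (v^T *m A *m v) ord0 ord0.

Definition symmetricmx (R : realType) (k : nat) (A : 'M[R]_k) : Prop := A^T = A.

Definition psdmx (R : realType) (k : nat) (A : 'M[R]_k) : Prop :=
  symmetricmx A /\ forall v : 'cV[R]_k, 0 <= qform A v.

Definition pdmx (R : realType) (k : nat) (A : 'M[R]_k) : Prop :=
  symmetricmx A /\ forall v : 'cV[R]_k, v != 0 -> 0 < qform A v.

Definition loewner_le (R : realType) (k : nat) (A B : 'M[R]_k) : Prop :=
  psdmx (B - A).

Definition is_spd_sqrt (R : realType) (k : nat) (A B : 'M[R]_k) : Prop :=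
  pdmx B /\ B *m B = A.

Definition frob (R : realType) (m n : nat) (A : 'M[R]_(m, n)) : R :=
  Num.sqrt (\sum_(i < m) \sum_(j < n) A i j ^+ 2).

From mathcomp Require Import all_boot all_order all_algebra.
From mathcomp Require Import reals.
From mathcomp Require Import ring lra.
Import Order.TTheory GRing.Theory Num.Theory.
Set Implicit Arguments. Unset Strict Implicit. Unset Printing Implicit Defensive.
Local Open Scope ring_scope.

(* Put a = sqrt (n m_* ) and b = sqrt (n m^* ).  The Loewner bounds say
   a |X| <= |G X| <= b |X| in Frobenius norm, and the square root S of G^T G
   inherits them since |S X| = |G X|.  Cauchy-Schwarz for the positive form
   <X, S X> turns the two-sided bound into <X, S X> >= (a^2 / b) |X|^2.  The
   difference S - St solves the Sylvester equation
   S (S - St) + (S - St) St = G^T (G - Gt) + (G - Gt)^T Gt, and pairing it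
   with S - St gives |S - St| <= (b / a)^2 |G - Gt|.  Both estimates then follow
   from S^-1 - St^-1 = S^-1 (St - S) St^-1 and |S^-1 Y| <= |Y| / a. *)

Lemma col_mulmx (R : pzSemiRingType) p k q (M : 'M[R]_(p, k)) (X : 'M[R]_(k, q)) j :
  col j (M *m X) = M *m col j X.
Proof. by apply/matrixP => i l; rewrite !mxE; apply: eq_bigr => m _; rewrite !mxE. Qed.

Lemma invmxB (R : comUnitRingType) k (A B : 'M[R]_k) :
  A \in unitmx -> B \in unitmx -> invmx A - invmx B = invmx A *m (B - A) *m invmx B.
Proof. by move=> Au Bu; rewrite mulmxBr mulmxBl mulmxK // mulVmx // mul1mx. Qed.

Section FrobeniusInnerProduct.
Variable R : realType.

Definition mxdot p q (X Y : 'M[R]_(p, q)) : R := \tr (X^T *m Y).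

Lemma mxdotE p q (X Y : 'M[R]_(p, q)) :
  mxdot X Y = \sum_(i < p) \sum_(j < q) X i j * Y i j.
Proof.
rewrite /mxdot /mxtrace exchange_big /=; apply: eq_bigr => j _; rewrite !mxE.
by apply: eq_bigr => i _; rewrite mxE.
Qed.

Lemma mxdotC p q (X Y : 'M[R]_(p, q)) : mxdot X Y = mxdot Y X.
Proof. by rewrite !mxdotE; apply: eq_bigr => i _; apply: eq_bigr => j _; rewrite mulrC. Qed.

Lemma mxdotDr p q (X Y Z : 'M[R]_(p, q)) : mxdot X (Y + Z) = mxdot X Y + mxdot X Z.
Proof. by rewrite /mxdot mulmxDr mxtraceD. Qed.

Lemma mxdotZr p q a (X Y : 'M[R]_(p, q)) : mxdot X (a *: Y) = a * mxdot X Y.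
Proof. by rewrite /mxdot -scalemxAr mxtraceZ. Qed.

Lemma mxdotDl p q (X Y Z : 'M[R]_(p, q)) : mxdot (X + Y) Z = mxdot X Z + mxdot Y Z.
Proof. by rewrite mxdotC mxdotDr !(mxdotC Z). Qed.

Lemma mxdotZl p q a (X Y : 'M[R]_(p, q)) : mxdot (a *: X) Y = a * mxdot X Y.
Proof. by rewrite mxdotC mxdotZr mxdotC. Qed.

Lemma mxdotNr p q (X Y : 'M[R]_(p, q)) : mxdot X (- Y) = - mxdot X Y.
Proof. by rewrite /mxdot mulmxN linearN. Qed.

Lemma mxdotNN p q (X : 'M[R]_(p, q)) : mxdot (- X) (- X) = mxdot X X.
Proof. by rewrite mxdotNr mxdotC mxdotNr opprK. Qed.

Lemma mxdot_ge0 p q (X : 'M[R]_(p, q)) : 0 <= mxdot X X.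
Proof. by rewrite mxdotE; do 2!apply: sumr_ge0 => ? _; rewrite -expr2 sqr_ge0. Qed.

Lemma mxdot_trmx p q (X Y : 'M[R]_(p, q)) : mxdot X^T Y^T = mxdot X Y.
Proof. by rewrite /mxdot trmxK mxtrace_mulC -/(mxdot Y X) mxdotC. Qed.

Lemma mxdot_mulmxr p k q (M : 'M[R]_(p, k)) (X : 'M[R]_(p, q)) (Y : 'M[R]_(k, q)) :
  mxdot X (M *m Y) = mxdot (M^T *m X) Y.
Proof. by rewrite /mxdot trmx_mul trmxK mulmxA. Qed.

Lemma mxdot_sum_col p q (X Y : 'M[R]_(p, q)) :
  mxdot X Y = \sum_(j < q) mxdot (col j X) (col j Y).
Proof.
rewrite mxdotE exchange_big /=; apply: eq_bigr => j _; rewrite mxdotE.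
by apply: eq_bigr => i _; rewrite big_ord1 !mxE.
Qed.

Lemma qformE k (M : 'M[R]_k) v : qform M v = mxdot v (M *m v).
Proof. by rewrite /qform /mxdot /mxtrace big_ord1 mulmxA. Qed.

Lemma frobE p q (X : 'M[R]_(p, q)) : frob X = Num.sqrt (mxdot X X).
Proof. by rewrite /frob mxdotE; under eq_bigr do under eq_bigr do rewrite expr2. Qed.

Lemma frob_ge0 p q (X : 'M[R]_(p, q)) : 0 <= frob X.
Proof. exact: sqrtr_ge0. Qed.

Lemma sqr_frob p q (X : 'M[R]_(p, q)) : frob X ^+ 2 = mxdot X X.
Proof. by rewrite frobE sqr_sqrtr ?mxdot_ge0. Qed.

Lemma frob_trmx p q (X : 'M[R]_(p, q)) : frob X^T = frob X.
Proof. by rewrite !frobE mxdot_trmx. Qed.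

Lemma frobN p q (X : 'M[R]_(p, q)) : frob (- X) = frob X.
Proof. by rewrite !frobE mxdotNN. Qed.

Lemma frob_le_scale p q p' q' (X : 'M[R]_(p, q)) (Y : 'M[R]_(p', q')) c :
  0 <= c -> (frob X <= c * frob Y) = (mxdot X X <= c ^+ 2 * mxdot Y Y).
Proof.
move=> c0; rewrite -!sqr_frob -exprMn ler_pXn2r // nnegrE ?frob_ge0 //.
by rewrite mulr_ge0 ?frob_ge0.
Qed.

Lemma le_of_sqr_le_mul (x m : R) : 0 <= x -> 0 <= m -> x ^+ 2 <= m * x -> x <= m.
Proof. by rewrite le0r => /predU1P[-> //|x_gt0] _; rewrite expr2 ler_pM2r. Qed.

Lemma frob_ge_scale p q p' q' (X : 'M[R]_(p, q)) (Y : 'M[R]_(p', q')) c :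
  0 <= c -> (c * frob Y <= frob X) = (c ^+ 2 * mxdot Y Y <= mxdot X X).
Proof.
move=> c0; rewrite -!sqr_frob -exprMn ler_pXn2r // nnegrE ?frob_ge0 //.
by rewrite mulr_ge0 ?frob_ge0.
Qed.

Lemma discriminant_le0 (a b c : R) :
  0 <= a -> (forall t, 0 <= a * t ^+ 2 + 2 * b * t + c) -> b ^+ 2 <= a * c.
Proof.
move=> a0 H; have [a_eq0|a_neq0] := eqVneq a 0.
  rewrite a_eq0 mul0r; have [->|b_neq0] := eqVneq b 0; first by rewrite expr0n.
  have := H (- (c + 1) / (2 * b)); rewrite a_eq0.
  have -> : 0 * (- (c + 1) / (2 * b)) ^+ 2 + 2 * b * (- (c + 1) / (2 * b)) + c = -1.
    by field; rewrite b_neq0.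
  by rewrite lerNr oppr0 ler10.
have a_gt0 : 0 < a by rewrite lt0r a_neq0.
have := H (- b / a).
have -> : a * (- b / a) ^+ 2 + 2 * b * (- b / a) + c = c - b ^+ 2 / a by field.
by rewrite subr_ge0 ler_pdivrMr // mulrC.
Qed.

Lemma cauchy_schwarz_psdmx p q (M : 'M[R]_p) (X Y : 'M[R]_(p, q)) :
  M^T = M -> (forall Z : 'M[R]_(p, q), 0 <= mxdot Z (M *m Z)) ->
  mxdot X (M *m Y) ^+ 2 <= mxdot X (M *m X) * mxdot Y (M *m Y).
Proof.
move=> symM psdM; apply: discriminant_le0 => [|t]; first exact: psdM.
have := psdM (t *: X + Y).
rewrite mulmxDr -scalemxAr mxdotDl !mxdotDr !mxdotZl !mxdotZr.
have -> : mxdot Y (M *m X) = mxdot X (M *m Y) by rewrite mxdot_mulmxr symM mxdotC.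
lra.
Qed.

Lemma mxdot_le_frob p q (X Y : 'M[R]_(p, q)) : mxdot X Y <= frob X * frob Y.
Proof.
have psd1 (Z : 'M[R]_(p, q)) : 0 <= mxdot Z (1%:M *m Z) by rewrite mul1mx mxdot_ge0.
have := cauchy_schwarz_psdmx X Y (trmx1 _ _) psd1.
rewrite !mul1mx -!sqr_frob -exprMn.
have := mulr_ge0 (frob_ge0 X) (frob_ge0 Y); nra.
Qed.

Lemma frobD_le p q (X Y : 'M[R]_(p, q)) : frob (X + Y) <= frob X + frob Y.
Proof.
rewrite -(ler_pXn2r (_ : 0 < 2)%N) ?nnegrE ?addr_ge0 ?frob_ge0 //.
rewrite sqr_frob mxdotDl !mxdotDr (mxdotC Y X) sqrrD !sqr_frob.
have := mxdot_le_frob X Y; lra.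
Qed.

Lemma frob_mulmx_le p k (P : 'M[R]_(p, k)) c :
  0 <= c -> (forall v : 'cV[R]_k, frob (P *m v) <= c * frob v) ->
  forall q (X : 'M[R]_(k, q)), frob (P *m X) <= c * frob X.
Proof.
move=> c0 Pv q X; rewrite frob_le_scale // (mxdot_sum_col (P *m X)) (mxdot_sum_col X).
by rewrite mulr_sumr; apply: ler_sum => j _; rewrite col_mulmx -frob_le_scale.
Qed.

Lemma frob_mulmx_ge p k (P : 'M[R]_(p, k)) c :
  0 <= c -> (forall v : 'cV[R]_k, c * frob v <= frob (P *m v)) ->
  forall q (X : 'M[R]_(k, q)), c * frob X <= frob (P *m X).
Proof.
move=> c0 Pv q X; rewrite frob_ge_scale // (mxdot_sum_col (P *m X)) (mxdot_sum_col X).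
by rewrite mulr_sumr; apply: ler_sum => j _; rewrite col_mulmx -frob_ge_scale.
Qed.

Lemma frob_trmx_mulmx_le p k (P : 'M[R]_(p, k)) c :
  0 <= c -> (forall q (X : 'M[R]_(k, q)), frob (P *m X) <= c * frob X) ->
  forall q (Y : 'M[R]_(p, q)), frob (P^T *m Y) <= c * frob Y.
Proof.
move=> c0 PX q Y; set w := P^T *m Y.
apply: le_of_sqr_le_mul; rewrite ?mulr_ge0 ?frob_ge0 //.
rewrite sqr_frob {1}/w -mxdot_mulmxr (mulrC c) -mulrA.
exact: le_trans (mxdot_le_frob _ _) (ler_wpM2l (frob_ge0 _) (PX _ _)).
Qed.

Lemma frob_invmx_mulmx_le k (S : 'M[R]_k) c :
  S \in unitmx -> 0 < c -> (forall q (X : 'M[R]_(k, q)), c * frob X <= frob (S *m X)) ->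
  forall q (Y : 'M[R]_(k, q)), frob (invmx S *m Y) <= c^-1 * frob Y.
Proof.
move=> Su c0 SX q Y; rewrite ler_pdivlMl //.
by have := SX _ (invmx S *m Y); rewrite mulmxA mulmxV // mul1mx.
Qed.

(* Cauchy-Schwarz for the form <., S .> stands in for the spectral theorem:
   |S X|^4 <= <X, S X> <S X, S (S X)> <= b <X, S X> |S X|^2. *)
Lemma mxdot_psdmx_ge k (S : 'M[R]_k) a b :
  S^T = S -> (forall q (Z : 'M[R]_(k, q)), 0 <= mxdot Z (S *m Z)) ->
  0 <= a -> 0 <= b ->
  (forall q (X : 'M[R]_(k, q)), a * frob X <= frob (S *m X)) ->
  (forall q (X : 'M[R]_(k, q)), frob (S *m X) <= b * frob X) ->
  forall q (X : 'M[R]_(k, q)), a ^+ 2 * frob X ^+ 2 <= b * mxdot X (S *m X).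
Proof.
move=> symS psdS a0 b0 lbS ubS q X.
set d := mxdot X (S *m X); set s := frob (S *m X) ^+ 2.
have sE : s = mxdot X (S *m (S *m X)) by rewrite /s sqr_frob [RHS]mxdot_mulmxr symS.
have cs := cauchy_schwarz_psdmx X (S *m X) symS (psdS q); rewrite -sE in cs.
have SSX : mxdot (S *m X) (S *m (S *m X)) <= b * s.
  apply: le_trans (mxdot_le_frob _ _) _; rewrite /s expr2 mulrCA.
  by rewrite ler_wpM2l ?frob_ge0 ?ubS.
have s_le : s <= b * d.
  apply: le_of_sqr_le_mul; rewrite ?sqr_ge0 ?mulr_ge0 ?psdS //.
  by apply: le_trans cs _; rewrite -/d (mulrC b d) -mulrA ler_wpM2l ?psdS.
by apply: le_trans s_le; rewrite -exprMn /s ler_pXn2r ?nnegrE ?mulr_ge0 ?frob_ge0 ?lbS.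
Qed.

Lemma frob_sylvester_ge k (S T X : 'M[R]_k) c :
  T^T = T ->
  (forall Z : 'M[R]_k, c * frob Z ^+ 2 <= mxdot Z (S *m Z)) ->
  (forall Z : 'M[R]_k, c * frob Z ^+ 2 <= mxdot Z (T *m Z)) ->
  2 * c * frob X <= frob (S *m X + X *m T).
Proof.
move=> symT lbS lbT; set D := S *m X + X *m T.
have XT : mxdot X (X *m T) = mxdot X^T (T *m X^T).
  by rewrite -mxdot_trmx trmx_mul symT.
have key : 2 * c * frob X * frob X <= frob D * frob X.
  have := lbT X^T; rewrite frob_trmx -XT.
  have := mxdot_le_frob X D; rewrite mxdotDr.
  have := lbS X; rewrite expr2; lra.
have := frob_ge0 X; rewrite le0r => /predU1P[->|X_gt0]; first by rewrite mulr0 frob_ge0.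
by rewrite -(ler_pM2r X_gt0).
Qed.

End FrobeniusInnerProduct.

Section GramSquareRoot.
Variable R : realType.

Lemma qformB k (A B : 'M[R]_k) v : qform (A - B) v = qform A v - qform B v.
Proof. by rewrite !qformE mulmxBl mxdotDr mxdotNr. Qed.

Lemma qform_scalar k (c : R) (v : 'cV[R]_k) : qform c%:M v = c * frob v ^+ 2.
Proof. by rewrite qformE mul_scalar_mx mxdotZr sqr_frob. Qed.

Lemma qform_gram n k (G : 'M[R]_(n, k)) d v :
  qform (d *: (G^T *m G)) v = d * frob (G *m v) ^+ 2.
Proof. by rewrite qformE -scalemxAl mxdotZr -mulmxA mxdot_mulmxr trmxK sqr_frob. Qed.

Lemma loewner_scalar_le0 k (c : R) : (0 < k)%N -> loewner_le (c%:M : 'M[R]_k) 0 -> c <= 0.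
Proof.
move=> k_gt0 [_ psd]; have := psd (const_mx 1).
rewrite qformB qform_scalar /qform mulmx0 mul0mx mxE sub0r oppr_ge0 sqr_frob mxdotE.
under eq_bigr do rewrite big_ord1 !mxE mulr1.
by rewrite sumr_const card_ord mulr_natr pmulrn_lle0.
Qed.

Lemma gram_rows_gt0 n k (G : 'M[R]_(n, k)) c :
  (0 < k)%N -> 0 < c -> loewner_le c%:M (n%:R^-1 *: (G^T *m G)) -> (0 < n)%N.
Proof.
move=> k_gt0 c_gt0; case: n G => [|n] // G; rewrite mulr0n invr0 scale0r.
by move/(loewner_scalar_le0 k_gt0); rewrite leNgt c_gt0.
Qed.

Lemma frob_gram_mulmx_ge n k (G : 'M[R]_(n, k)) c :
  (0 < n)%N -> 0 <= c -> loewner_le c%:M (n%:R^-1 *: (G^T *m G)) ->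
  forall q (X : 'M[R]_(k, q)), Num.sqrt (n%:R * c) * frob X <= frob (G *m X).
Proof.
move=> n_gt0 c0 [_ psd]; apply: frob_mulmx_ge => [|v]; first exact: sqrtr_ge0.
rewrite frob_ge_scale ?sqrtr_ge0 // sqr_sqrtr ?mulr_ge0 // -!sqr_frob -mulrA.
by have := psd v; rewrite qformB qform_gram qform_scalar subr_ge0 ler_pdivlMl ?ltr0n.
Qed.

Lemma frob_gram_mulmx_le n k (G : 'M[R]_(n, k)) c :
  (0 < n)%N -> 0 <= c -> loewner_le (n%:R^-1 *: (G^T *m G)) c%:M ->
  forall q (X : 'M[R]_(k, q)), frob (G *m X) <= Num.sqrt (n%:R * c) * frob X.
Proof.
move=> n_gt0 c0 [_ psd]; apply: frob_mulmx_le => [|v]; first exact: sqrtr_ge0.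
rewrite frob_le_scale ?sqrtr_ge0 // sqr_sqrtr ?mulr_ge0 // -!sqr_frob -mulrA.
by have := psd v; rewrite qformB qform_gram qform_scalar subr_ge0 ler_pdivrMl ?ltr0n.
Qed.

Lemma pdmx_mxdot_ge0 k (S : 'M[R]_k) :
  pdmx S -> forall q (Z : 'M[R]_(k, q)), 0 <= mxdot Z (S *m Z).
Proof.
move=> [_ pdS] q Z; rewrite mxdot_sum_col; apply: sumr_ge0 => j _.
rewrite col_mulmx -qformE; have [->|Zj_neq0] := eqVneq (col j Z) 0.
  by rewrite /qform mulmx0 mxE.
exact: ltW (pdS _ Zj_neq0).
Qed.

Lemma pdmx_unitmx k (S : 'M[R]_k) : pdmx S -> S \in unitmx.
Proof.
move=> [_ pdS]; rewrite unitmxE unitfE; apply/negP => /det0P[v v_neq0 vS].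
have vT_neq0 : v^T != 0 by apply: contra v_neq0 => /eqP/(congr1 trmx); rewrite trmxK trmx0 => ->.
by have := pdS _ vT_neq0; rewrite /qform trmxK vS mul0mx mxE ltxx.
Qed.

Lemma frob_spd_sqrt_mulmx n k (G : 'M[R]_(n, k)) S :
  is_spd_sqrt (G^T *m G) S -> forall q (X : 'M[R]_(k, q)), frob (S *m X) = frob (G *m X).
Proof. by move=> [[symS _] SS] q X; rewrite !frobE !mxdot_mulmxr symS !mulmxA SS. Qed.

Section Bounds.
Variables (n k : nat) (G : 'M[R]_(n, k)) (S : 'M[R]_k) (a b : R).
Hypotheses (a_gt0 : 0 < a) (b_gt0 : 0 < b).
Hypothesis G_lbound : forall q (X : 'M[R]_(k, q)), a * frob X <= frob (G *m X).
Hypothesis G_ubound : forall q (X : 'M[R]_(k, q)), frob (G *m X) <= b * frob X.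
Hypothesis S_sqrt : is_spd_sqrt (G^T *m G) S.

Lemma spd_sqrt_sym : S^T = S.
Proof. by case: S_sqrt => [[]]. Qed.

Lemma spd_sqrt_unitmx : S \in unitmx.
Proof. exact: pdmx_unitmx S_sqrt.1. Qed.

Lemma frob_spd_sqrt_mulmx_ge q (X : 'M[R]_(k, q)) : a * frob X <= frob (S *m X).
Proof. by rewrite (frob_spd_sqrt_mulmx S_sqrt). Qed.

Lemma frob_spd_sqrt_mulmx_le q (X : 'M[R]_(k, q)) : frob (S *m X) <= b * frob X.
Proof. by rewrite (frob_spd_sqrt_mulmx S_sqrt). Qed.

Lemma mxdot_spd_sqrt_ge q (X : 'M[R]_(k, q)) : a ^+ 2 / b * frob X ^+ 2 <= mxdot X (S *m X).
Proof.
rewrite mulrAC ler_pdivrMr // [leRHS]mulrC.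
exact: mxdot_psdmx_ge spd_sqrt_sym (pdmx_mxdot_ge0 S_sqrt.1) (ltW a_gt0) (ltW b_gt0)
  frob_spd_sqrt_mulmx_ge frob_spd_sqrt_mulmx_le q X.
Qed.

Lemma frob_invmx_spd_sqrt_mulmx_le q (Y : 'M[R]_(k, q)) : frob (invmx S *m Y) <= a^-1 * frob Y.
Proof. exact: frob_invmx_mulmx_le spd_sqrt_unitmx a_gt0 frob_spd_sqrt_mulmx_ge _ Y. Qed.

Lemma frob_mulmx_invmx_spd_sqrt_le p (Y : 'M[R]_(p, k)) : frob (Y *m invmx S) <= a^-1 * frob Y.
Proof.
rewrite -frob_trmx trmx_mul trmx_inv spd_sqrt_sym -(frob_trmx Y).
exact: frob_invmx_spd_sqrt_mulmx_le.
Qed.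

End Bounds.

End GramSquareRoot.

Section SqrtPerturbation.
Variable R : realType.
Variables (n k : nat) (G Gt : 'M[R]_(n, k)) (S St : 'M[R]_k) (a b : R).
Hypotheses (a_gt0 : 0 < a) (b_gt0 : 0 < b).
Hypothesis G_lbound : forall q (X : 'M[R]_(k, q)), a * frob X <= frob (G *m X).
Hypothesis G_ubound : forall q (X : 'M[R]_(k, q)), frob (G *m X) <= b * frob X.
Hypothesis Gt_lbound : forall q (X : 'M[R]_(k, q)), a * frob X <= frob (Gt *m X).
Hypothesis Gt_ubound : forall q (X : 'M[R]_(k, q)), frob (Gt *m X) <= b * frob X.
Hypotheses (S_sqrt : is_spd_sqrt (G^T *m G) S) (St_sqrt : is_spd_sqrt (Gt^T *m Gt) St).

Lemma frob_spd_sqrt_sub_le : frob (S - St) <= (b / a) ^+ 2 * frob (G - Gt).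
Proof.
have sylvester := frob_sylvester_ge (S - St) (spd_sqrt_sym St_sqrt)
  (mxdot_spd_sqrt_ge a_gt0 b_gt0 G_lbound G_ubound S_sqrt (q := k))
  (mxdot_spd_sqrt_ge a_gt0 b_gt0 Gt_lbound Gt_ubound St_sqrt (q := k)).
have sqr_sub : S *m (S - St) + (S - St) *m St = G^T *m (G - Gt) + (Gt^T *m (G - Gt))^T.
  case: S_sqrt St_sqrt => [_ SS] [_ StSt].
  by rewrite trmx_mul trmxK [(G - Gt)^T]linearB !mulmxBr !mulmxBl !addrA !subrK SS StSt.
rewrite sqr_sub in sylvester.
set c := a ^+ 2 / b in sylvester *; have c_gt0 : 0 < c by rewrite divr_gt0 ?exprn_gt0.
have GE_le := frob_trmx_mulmx_le (ltW b_gt0) G_ubound (G - Gt).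
have GtE_le := frob_trmx_mulmx_le (ltW b_gt0) Gt_ubound (G - Gt).
have := frobD_le (G^T *m (G - Gt)) (Gt^T *m (G - Gt))^T; rewrite frob_trmx => D_le.
have cE : c * (b / a) ^+ 2 = b by rewrite /c; field; rewrite !gt_eqF.
rewrite -(ler_pM2l c_gt0) mulrA cE; lra.
Qed.

Lemma frob_invmx_spd_sqrt_sub_le :
  frob (invmx S - invmx St) <= b ^+ 2 / a ^+ 4 * frob (G - Gt).
Proof.
rewrite invmxB ?(spd_sqrt_unitmx S_sqrt) ?(spd_sqrt_unitmx St_sqrt) // -mulmxA.
have ainv_ge0 : 0 <= a^-1 by rewrite invr_ge0 ltW.
have -> : b ^+ 2 / a ^+ 4 = a^-1 * (a^-1 * (b / a) ^+ 2) by field; rewrite gt_eqF.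
apply: le_trans (frob_invmx_spd_sqrt_mulmx_le a_gt0 G_lbound S_sqrt _) _.
rewrite -mulrA ler_wpM2l //.
apply: le_trans (frob_mulmx_invmx_spd_sqrt_le a_gt0 Gt_lbound St_sqrt _) _.
by rewrite -mulrA ler_wpM2l // -opprB frobN frob_spd_sqrt_sub_le.
Qed.

Lemma frob_normalized_sub_le :
  frob (G *m invmx S - Gt *m invmx St) <= (a^-1 + b ^+ 3 / a ^+ 4) * frob (G - Gt).
Proof.
have -> : G *m invmx S - Gt *m invmx St = (G - Gt) *m invmx S + Gt *m (invmx S - invmx St).
  by rewrite mulmxBl mulmxBr addrA subrK.
apply: le_trans (frobD_le _ _) _.
have := frob_mulmx_invmx_spd_sqrt_le a_gt0 G_lbound S_sqrt (G - Gt).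
have := le_trans (Gt_ubound _) (ler_wpM2l (ltW b_gt0) frob_invmx_spd_sqrt_sub_le).
have -> : b * (b ^+ 2 / a ^+ 4 * frob (G - Gt)) = b ^+ 3 / a ^+ 4 * frob (G - Gt) by ring.
rewrite mulrDl; lra.
Qed.

End SqrtPerturbation.

Theorem lemmaS5p4 (R : realType) (K : nat) (mlo mhi : R) :
  (1 <= K)%N -> 0 < mlo -> mlo <= mhi ->
  exists L1 L2 : R, 0 < L1 /\ 0 < L2 /\
    forall (n : nat) (G Gt : 'M[R]_(n, K)) (S St : 'M[R]_K),
      loewner_le (mlo%:M) ((n%:R)^-1 *: (G^T *m G)) ->
      loewner_le ((n%:R)^-1 *: (G^T *m G)) (mhi%:M) ->
      loewner_le (mlo%:M) ((n%:R)^-1 *: (Gt^T *m Gt)) ->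
      loewner_le ((n%:R)^-1 *: (Gt^T *m Gt)) (mhi%:M) ->
      is_spd_sqrt (G^T *m G) S ->
      is_spd_sqrt (Gt^T *m Gt) St ->
      frob (invmx S - invmx St) <= L1 * (n%:R)^-1 * frob (G - Gt) /\
      frob (G *m invmx S - Gt *m invmx St)
        <= L2 * (Num.sqrt (n%:R))^-1 * frob (G - Gt).
Proof.
move=> K_gt0 mlo_gt0 mlo_le_mhi; have mhi_gt0 := lt_le_trans mlo_gt0 mlo_le_mhi.
set u := Num.sqrt mlo; set t := Num.sqrt mhi.
have u_gt0 : 0 < u by rewrite sqrtr_gt0.
have t_gt0 : 0 < t by rewrite sqrtr_gt0.
exists (t ^+ 2 / u ^+ 4), (u^-1 + t ^+ 3 / u ^+ 4).
split; first by rewrite divr_gt0 ?exprn_gt0.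
split; first by rewrite addr_gt0 ?invr_gt0 ?divr_gt0 ?exprn_gt0.
move=> n G Gt S St Glo Ghi Gtlo Gthi S_sqrt St_sqrt.
have n_gt0 := gram_rows_gt0 K_gt0 mlo_gt0 Glo.
set s := Num.sqrt n%:R; have s_gt0 : 0 < s by rewrite sqrtr_gt0 ltr0n.
have [a_def b_def] : Num.sqrt (n%:R * mlo) = s * u /\ Num.sqrt (n%:R * mhi) = s * t.
  by rewrite !sqrtrM ?ler0n.
have lbound := frob_gram_mulmx_ge n_gt0 (ltW mlo_gt0).
have ubound := frob_gram_mulmx_le n_gt0 (ltW mhi_gt0).
rewrite a_def b_def in lbound ubound.
have su_gt0 := mulr_gt0 s_gt0 u_gt0; have st_gt0 := mulr_gt0 s_gt0 t_gt0.
have nE : n%:R = s ^+ 2 by rewrite sqr_sqrtr ?ler0n.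
have -> : t ^+ 2 / u ^+ 4 / n%:R = (s * t) ^+ 2 / (s * u) ^+ 4.
  by rewrite nE; field; rewrite !gt_eqF.
have -> : (u^-1 + t ^+ 3 / u ^+ 4) / s = (s * u)^-1 + (s * t) ^+ 3 / (s * u) ^+ 4.
  by field; rewrite !gt_eqF.
split.
- exact: frob_invmx_spd_sqrt_sub_le su_gt0 st_gt0 (lbound _ _ Glo) (ubound _ _ Ghi)
    (lbound _ _ Gtlo) (ubound _ _ Gthi) S_sqrt St_sqrt.
- exact: frob_normalized_sub_le su_gt0 st_gt0 (lbound _ _ Glo) (ubound _ _ Ghi)
    (lbound _ _ Gtlo) (ubound _ _ Gthi) S_sqrt St_sqrt.
Qed.
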